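(* Let $\wp\colon\tilde X\to X$ be a $2$-cover of connected graphs, let $G\leq\mathrm{Aut}\,X$ be vertex-transitive, and suppose $\wp$ is $G$-split with a sectional complement. Then $\mathrm{CT}(\wp)$ has a complement within the lifted group $\tilde G$ which is transitive on $V(\tilde X)$ if and only if $G$ has a vertex-transitive subgroup of index $2$.
   Context: Graphs are finite and simple; maps are composed on the right. A regular covering projection $\wp\colon\tilde X\to X$ is a surjective graph homomorphism that is a local bijection on neighbourhoods and such that the group $\mathrm{CT}(\wp)$ of covering transformations (automorphisms $c$ of $\tilde X$ with $c\wp=\wp$) acts regularly on each fibre; it is a $2$-cover if $\mathrm{CT}(\wp)\cong\mathbb{Z}_2$. A lift of $g\in\mathrm{Aut}\,X$ is $\tilde g\in\mathrm{Aut}\,\tilde X$ with $\wp g=\tilde g\wp$; $G$ lifts if each element has a lift, and the lifted group $\tilde G$ consists of all lifts of elements of $G$ (so $\tilde G/\mathrm{CT}(\wp)\cong G$). $\wp$ is $G$-split if $G$ lifts and $\mathrm{CT}(\wp)$ has a complement in $\tilde G$. A section is a set of vertices of $\tilde X$ meeting each fibre in exactly one vertex; a complement is sectional if it leaves some section invariant. *)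

From mathcomp Require Import all_boot all_fingroup.
Set Implicit Arguments. Unset Strict Implicit. Unset Printing Implicit Defensive.
Local Open Scope group_scope.

Definition simple_graph (T : finType) (e : rel T) : Prop :=
  symmetric e /\ irreflexive e.

Definition connected_graph (T : finType) (e : rel T) : Prop :=
  forall x y : T, connect e x y.

Definition Aut_graph (T : finType) (e : rel T) : {set {perm T}} :=
  [set s : {perm T} | [forall x, forall y, e (s x) (s y) == e x y]].

Definition nbhd (T : finType) (e : rel T) (x : T) : {set T} := [set y | e x y].

Definition covering_proj (Vt V : finType) (et : rel Vt) (e : rel V)
    (p : Vt -> V) : Prop :=
  [/\ forall v : V, exists u : Vt, p u = v,
      forall u w : Vt, et u w -> e (p u) (p w),
      forall u : Vt, {in nbhd et u &, injective p} &
      forall u : Vt, p @: nbhd et u = nbhd e (p u)].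

Definition CT (Vt V : finType) (et : rel Vt) (p : Vt -> V) : {set {perm Vt}} :=
  [set c in Aut_graph et | [forall x, p (c x) == p x]].

Definition regular_cover (Vt V : finType) (et : rel Vt) (e : rel V)
    (p : Vt -> V) : Prop :=
  covering_proj et e p /\
  forall x y : Vt, p x = p y -> exists! c : {perm Vt}, c \in CT et p /\ c x = y.

Definition two_cover (Vt V : finType) (et : rel Vt) (e : rel V)
    (p : Vt -> V) : Prop :=
  regular_cover et e p /\ #|CT et p| = 2%N.

(* gt is a lift of g (maps composed on the right: p g = gt p). *)
Definition is_lift (Vt V : finType) (et : rel Vt) (p : Vt -> V)
    (g : {perm V}) (gt : {perm Vt}) : Prop :=
  gt \in Aut_graph et /\ forall x : Vt, p (gt x) = g (p x).

Definition lifts (Vt V : finType) (et : rel Vt) (p : Vt -> V)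
    (G : {set {perm V}}) : Prop :=
  forall g, g \in G -> exists gt, is_lift et p g gt.

Definition lifted_group (Vt V : finType) (et : rel Vt) (p : Vt -> V)
    (G : {set {perm V}}) : {set {perm Vt}} :=
  [set gt in Aut_graph et | [exists g in G, [forall x, p (gt x) == g (p x)]]].

Definition is_section (Vt V : finType) (p : Vt -> V) (S : {set Vt}) : Prop :=
  forall v : V, #|S :&: p @^-1: [set v]| = 1%N.

Definition sectional (Vt V : finType) (p : Vt -> V) (K : {set {perm Vt}}) : Prop :=
  exists S : {set Vt}, is_section p S /\ forall k, k \in K -> (fun x => k x) @: S = S.

Definition vertex_transitive (T : finType) (G : {set {perm T}}) : bool :=
  [transitive G, on [set: T] | 'P].

From mathcomp Require Import all_boot all_fingroup.
Set Implicit Arguments. Unset Strict Implicit. Unset Printing Implicit Defensive.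
Local Open Scope group_scope.

(* Let L be the lifted group, c the nontrivial covering transformation and K
   the sectional complement, fixing the section S.  As L = K u cK, an element
   of L maps S into S when it lies in K and onto the complement of S
   otherwise, and the projection L -> G maps every complement of CT = <c>
   isomorphically onto G.  A transitive complement K' is not contained in K,
   so K' :&: K has index 2 in K', and its image in G is transitive because the
   elements of K' mapping a point of S into S lie in K.  Conversely, for H
   transitive of index 2 in G, the kernel of the product of the two index-2
   characters of L given by K and by H (through the projection) is a
   complement of CT: lifts in K of elements of H act transitively on S and on
   its complement, and c times a lift of an element of G \ H swaps the two. *)

Lemma index2_memM (gT : finGroupType) (L K : {group gT}) x y :
    K \subset L -> #|L : K| = 2 -> x \in L -> y \in L ->
  (x * y \in K) = ((x \in K) == (y \in K)).
Proof.
move=> sKL iKL Lx Ly; case Kx: (x \in K); first by rewrite groupMl.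
case Ky: (y \in K); first by rewrite groupMr // Kx.
have /(rcoset_index2 sKL iKL) defLK : y^-1 \in L :\: K by rewrite !inE !groupV Ky Ly.
have : x \in K :* y^-1 by rewrite defLK !inE Kx Lx.
by rewrite mem_rcoset invgK.
Qed.

Lemma leq_indexS (gT : finGroupType) (H L K : {set gT}) :
  H \subset L -> #|H : K| <= #|L : K|.
Proof. by move=> sHL; rewrite subset_leq_card ?imsetS. Qed.

Lemma index_compl (gT : finGroupType) (L C K : {group gT}) :
  K \in [complements to C in L] -> #|L : K| = #|C|.
Proof.
case/complP=> tiCK defL.
by rewrite -divgS -defL ?mulG_subr // TI_cardMg // mulnK ?cardG_gt0.
Qed.

Lemma compl_order2 (gT : finGroupType) (L C K : {group gT}) (c : gT) :
    C :=: [set 1; c] -> C \subset L -> K \subset L -> c \notin K ->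
    {in L, forall x, (x \in K) || (c * x \in K)} ->
  K \in [complements to C in L].
Proof.
move=> defC sCL sKL notKc LKc; apply/complP; split.
  apply/trivgP/subsetP=> x /setIP[]; rewrite defC => /set2P[->|->] // Kc.
  by rewrite Kc in notKc.
apply/eqP; rewrite eqEsubset mul_subG //=; apply/subsetP=> x Lx.
have Cc : c \in C by rewrite defC !inE eqxx orbT.
case/orP: (LKc x Lx) => [Kx | Kcx]; first by rewrite -[x]mul1g mem_mulg.
by rewrite -[x](mulKg c) mem_mulg ?groupV.
Qed.

Lemma group_set_index2_eq (gT rT : finGroupType) (D K : {group gT})
    (G H : {group rT}) (f : {morphism D >-> rT}) :
    K \subset D -> #|D : K| = 2 -> H \subset G -> #|G : H| = 2 -> f @* D \subset G ->
  group_set [set x in D | (x \in K) == (f x \in H)].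
Proof.
move=> sKD iKD sHG iHG sfDG; have fG x : x \in D -> f x \in G.
  by move=> Dx; rewrite (subsetP sfDG) ?mem_morphim.
apply/group_setP; split=> [|x y]; first by rewrite inE !group1 morph1 group1.
rewrite !inE => /andP[Dx /eqP xKH] /andP[Dy /eqP yKH].
by rewrite groupM // morphM // (index2_memM sKD) // (index2_memM sHG) ?fG // xKH yKH /=.
Qed.

Lemma injm_restrm_compl (aT rT : finGroupType) (D K : {group aT})
    (f : {morphism D >-> rT}) (sKD : K \subset D) :
  K \in [complements to 'ker f in D] -> 'injm (restrm sKD f).
Proof. by case/complP=> tiKK _; rewrite ker_restrm setIC tiKK. Qed.

Lemma morphim_compl_ker (aT rT : finGroupType) (D K : {group aT})
    (f : {morphism D >-> rT}) :
  K \in [complements to 'ker f in D] -> f @* K = f @* D.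
Proof.
case/complP=> _ defD; have -> : f @* D = f @* ('ker f * K) by rewrite defD.
by rewrite morphimMl ?subsetIl // morphim_ker mul1g.
Qed.

Lemma vertex_transitiveP (T : finType) (x0 : T) (A : {group {perm T}}) :
  reflect (forall x y, exists2 a, a \in A & a x = y) (vertex_transitive A).
Proof.
apply: (iffP idP) => [trA x y | trA].
  by have [a Aa ->] := atransP2 trA (in_setT x) (in_setT y); exists a.
apply/imsetP; exists x0 => //; apply/setP=> y; rewrite in_setT.
by have [a Aa <-] := trA x0 y; apply/esym/imsetP; exists a.
Qed.

Lemma Aut_graph_group_set (T : finType) (e : rel T) : group_set (Aut_graph e).
Proof.
apply/group_setP; split=> [|s t]; rewrite !inE.
  by apply/'forall_forallP=> x y; rewrite !perm1.
move=> /'forall_forallP Hs /'forall_forallP Ht.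
by apply/'forall_forallP=> x y; rewrite !permM (eqP (Ht _ _)) (eqP (Hs _ _)).
Qed.
Canonical Aut_graph_group (T : finType) (e : rel T) := Group (Aut_graph_group_set e).

Lemma CT_group_set (Vt V : finType) (et : rel Vt) (p : Vt -> V) : group_set (CT et p).
Proof.
apply/group_setP; split=> [|a b]; rewrite ![_ \in CT _ _]inE ?group1 /=.
  by apply/forallP=> x; rewrite perm1.
move=> /andP[Aa /forallP Ha] /andP[Ab /forallP Hb].
by rewrite groupM //; apply/forallP=> x; rewrite permM (eqP (Hb _)) (eqP (Ha _)).
Qed.
Canonical CT_group (Vt V : finType) (et : rel Vt) (p : Vt -> V) :=
  Group (CT_group_set et p).

Lemma lifted_group_set (Vt V : finType) (et : rel Vt) (p : Vt -> V)
    (G : {group {perm V}}) : group_set (lifted_group et p G).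
Proof.
apply/group_setP; split=> [|s t]; rewrite ![_ \in lifted_group _ _ _]inE ?group1 /=.
  by apply/existsP; exists 1; rewrite group1; apply/forallP=> x; rewrite !perm1.
move=> /andP[As /existsP[g /andP[Gg /forallP Hg]]].
move=> /andP[At /existsP[h /andP[Gh /forallP Hh]]].
rewrite groupM //; apply/existsP; exists (g * h); rewrite groupM //.
by apply/forallP=> x; rewrite !permM (eqP (Hh _)) (eqP (Hg _)).
Qed.
Canonical lifted_group_group (Vt V : finType) (et : rel Vt) (p : Vt -> V)
    (G : {group {perm V}}) := Group (lifted_group_set et p G).

(* Junk value: [proj_perm p x = 1] when [x] does not permute the fibres of [p]. *)
Definition proj_perm (Vt V : finType) (p : Vt -> V) (x : {perm Vt}) : {perm V} :=
  odflt 1 [pick g : {perm V} | [forall z, p (x z) == g (p z)]].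

Section Projection.

Variables (Vt V : finType) (et : rel Vt) (p : Vt -> V) (G : {group {perm V}}).
Hypothesis p_surj : forall v, exists u, p u = v.

Lemma proj_permE (x : {perm Vt}) (g : {perm V}) :
  (forall z, p (x z) = g (p z)) -> proj_perm p x = g.
Proof.
move=> xg; rewrite /proj_perm; case: pickP => [g' /forallP xg'|/(_ g)] /=.
  by apply/permP=> v; have [u <-] := p_surj v; rewrite -(eqP (xg' u)) xg.
by move/negP; case; apply/forallP=> z; rewrite xg.
Qed.

Lemma proj_perm_lifted x : x \in lifted_group et p G ->
  proj_perm p x \in G /\ forall z, p (x z) = proj_perm p x (p z).
Proof.
rewrite inE => /andP[_ /existsP[g /andP[Gg /forallP xg]]].
by rewrite (@proj_permE x g) => [|z]; [split=> // z|]; apply/eqP.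
Qed.

Lemma proj_permM : {in lifted_group et p G &, {morph proj_perm p : x y / x * y}}.
Proof.
move=> x y /proj_perm_lifted[_ px] /proj_perm_lifted[_ py].
by apply: proj_permE => z; rewrite !permM py px.
Qed.

Definition proj_morphism := Morphism proj_permM.

Lemma ker_proj : 'ker proj_morphism = CT et p.
Proof.
apply/setP=> a; apply/idP/idP => [Ka | CTa].
  have /setIP[La _] := Ka; have /= pa1 := mker Ka.
  have [_ pa] := proj_perm_lifted La; move: La; rewrite !inE => /andP[-> _].
  by apply/forallP=> z; rewrite pa pa1 perm1.
move: (CTa); rewrite inE => /andP[Aa /forallP pa].
have La : a \in lifted_group et p G.
  rewrite inE Aa; apply/existsP; exists 1.
  by rewrite group1; apply/forallP=> z; rewrite perm1.
by apply/kerP => //=; apply: proj_permE => z; rewrite perm1 (eqP (pa z)).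
Qed.

Lemma im_proj : lifts et p G -> proj_morphism @* lifted_group et p G = G.
Proof.
move=> liftG; apply/eqP; rewrite eqEsubset morphimEdom; apply/andP; split.
  by apply/subsetP=> _ /imsetP[x /proj_perm_lifted[Gx _] ->].
apply/subsetP=> g Gg; have [gt [Agt pgt]] := liftG g Gg.
apply/imsetP; exists gt; last by rewrite /= (proj_permE pgt).
by rewrite inE Agt; apply/existsP; exists g; rewrite Gg; apply/forallP=> z; rewrite pgt.
Qed.

End Projection.

Lemma two_cover_CT (Vt V : finType) (et : rel Vt) (e : rel V) (p : Vt -> V) :
  two_cover et e p -> exists2 c, c != 1 & CT et p = [set 1; c].
Proof.
case=> _ cardCT; have /cards1P[c defC] : #|CT et p :\ 1| == 1%N.
  by move: cardCT; rewrite (cardsD1 1) group1 add1n => -[->].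
have /setD1P[c1 _] : c \in CT et p :\ 1 by rewrite defC set11.
by exists c; rewrite // -defC setD1K.
Qed.

Section SplitTwoCover.

Variables (Vt V : finType) (et : rel Vt) (e : rel V) (p : Vt -> V) (c : {perm Vt}).
Hypotheses (cover : two_cover et e p) (c_neq1 : c != 1) (CT_c : CT et p = [set 1; c]).

Let p_surj : forall v, exists u, p u = v.
Proof. by case: cover => [[[]]]. Qed.

Let regular x y : p x = p y -> exists! a, a \in CT et p /\ a x = y.
Proof. by case: cover => [[_ reg] _]; apply: reg. Qed.

Lemma CT_c_mem : c \in CT et p.
Proof. by rewrite CT_c !inE eqxx orbT. Qed.

Lemma p_c x : p (c x) = p x.
Proof. by have := CT_c_mem; rewrite inE => /andP[_ /forallP/(_ x)/eqP]. Qed.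

Lemma c_fixpoint_free x : c x != x.
Proof.
apply: contra c_neq1 => /eqP cx; have [a [_ a_uniq]] := regular (erefl (p x)).
by rewrite -(a_uniq c) ?(a_uniq 1) ?group1 ?perm1 ?CT_c_mem.
Qed.

Lemma cover_fibre x y : p x = p y -> y = x \/ y = c x.
Proof.
case/regular=> a [[]]; rewrite CT_c => /set2P[]-> <- _; [left|right] => //.
by rewrite perm1.
Qed.

Variables (G : {group {perm V}}) (S : {set Vt}) (K : {group {perm Vt}}).
Hypotheses (liftG : lifts et p G) (S_section : is_section p S).
Hypotheses (K_compl : K \in [complements to CT et p in lifted_group et p G])
           (K_S : forall k, k \in K -> (fun x => k x) @: S = S).

Local Notation L := (lifted_group et p G).
Local Notation f := (proj_morphism et G p_surj).

Let ker_f : 'ker f = CT et p := ker_proj et G p_surj.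

Lemma c_lifted : c \in L.
Proof. by have := CT_c_mem; rewrite -ker_f => /setIP[]. Qed.

Lemma proj_c : f c = 1.
Proof. by apply: mker; rewrite ker_f CT_c_mem. Qed.

Section Complement.

Variable K' : {group {perm Vt}}.
Hypothesis K'_compl : K' \in [complements to CT et p in L].

Lemma compl_sub_lifted : K' \subset L.
Proof. by case/complP: K'_compl => _ <-; rewrite mulG_subr. Qed.

Lemma c_notin_compl : c \notin K'.
Proof.
case/complP: K'_compl => tiCK _; apply: contra c_neq1 => K'c.
have : c \in CT et p :&: K' by rewrite inE CT_c_mem.
by rewrite tiCK => /set1gP->.
Qed.

Lemma index_compl_lifted : #|L : K'| = 2.
Proof. by rewrite (index_compl K'_compl) /= CT_c cards2 eq_sym c_neq1. Qed.

Lemma compl_cM x : x \in L -> (c * x \in K') = (x \notin K').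
Proof.
move=> Lx; rewrite (index2_memM compl_sub_lifted index_compl_lifted) ?c_lifted //.
by rewrite (negbTE c_notin_compl).
Qed.

Lemma im_proj_compl : f @* K' = G.
Proof. by rewrite (morphim_compl_ker (f := f)) ?ker_f ?im_proj. Qed.

Lemma compl_lift g : g \in G -> exists2 b, b \in K' & f b = g.
Proof. by rewrite -{1}im_proj_compl => /morphimP[b _ K'b ->]; exists b. Qed.

End Complement.

Lemma section_rep v : exists2 s, s \in S & p s = v.
Proof.
have /eqP/cards1P[s defS] := S_section v.
by have := set11 s; rewrite -defS !inE => /andP[Ss /eqP]; exists s.
Qed.

Lemma mem_section_c x : (c x \in S) = (x \notin S).
Proof.
have /eqP/cards1P[s defS] := S_section (p x).
have memS y : p y = p x -> (y \in S) = (y == s).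
  by move=> pyx; rewrite -in_set1 -defS !inE pyx eqxx andbT.
rewrite !memS ?p_c //; have := set11 s; rewrite -defS !inE => /andP[_ /eqP psx].
have cx_x := negbTE (c_fixpoint_free x).
by have [->|->] := cover_fibre (esym psx); rewrite eqxx ?cx_x // eq_sym cx_x.
Qed.

Lemma mem_section_compl k x : k \in K -> (k x \in S) = (x \in S).
Proof.
move/K_S=> kS; rewrite -{1}kS; apply/imsetP/idP => [[y Sy /perm_inj->] // | Sx].
by exists x.
Qed.

Lemma mem_section_lifted k x : k \in L -> (k x \in S) = ((k \in K) == (x \in S)).
Proof.
move=> Lk; case Kk: (k \in K); first by rewrite mem_section_compl.
have Kck : c * k \in K by rewrite (compl_cM K_compl) ?Kk.
rewrite -[k](mulKg c) permM mem_section_compl // -[x in RHS](permKV c).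
by rewrite mem_section_c; case: (_ \in S).
Qed.

Section TransitiveComplement.

Variable K' : {group {perm Vt}}.
Hypotheses (K'_compl : K' \in [complements to CT et p in L])
           (K'_tr : vertex_transitive K').

Let sK'L := compl_sub_lifted K'_compl.

Lemma transitive_compl_notsub : ~~ (K' \subset K).
Proof.
have /imsetP[x0 _ _] := K'_tr; move/(vertex_transitiveP x0): K'_tr => trK'.
apply/negP=> sK'K; have [k K'k kx0] := trK' x0 (c x0).
have := mem_section_lifted x0 (subsetP sK'L k K'k).
by rewrite kx0 mem_section_c (subsetP sK'K k K'k); case: (x0 \in S).
Qed.

Lemma index_transitive_complI : #|K' : K' :&: K| = 2.
Proof.
apply/eqP; rewrite eqn_leq indexgI indexg_gt1 transitive_compl_notsub andbT.
by rewrite -(index_compl_lifted K_compl) leq_indexS.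
Qed.

Lemma index_proj_transitive_complI : #|G : f @* (K' :&: K)| = 2.
Proof.
have injf : 'injm (restrm sK'L f) by apply: injm_restrm_compl; rewrite ker_f.
rewrite -{1}(im_proj_compl K'_compl) -(restrmEsub sK'L f (subxx K')).
by rewrite -(restrmEsub sK'L f (subsetIl K' K)) index_injm ?index_transitive_complI.
Qed.

Lemma transitive_proj_transitive_complI : vertex_transitive (f @* (K' :&: K)).
Proof.
have /imsetP[x0 _ _] := K'_tr; move/(vertex_transitiveP x0): K'_tr => trK'.
apply/(vertex_transitiveP (p x0)) => u v.
have [su Ssu <-] := section_rep u; have [sv Ssv <-] := section_rep v.
have [k K'k ksu] := trK' su sv; have Lk := subsetP sK'L k K'k.
have Kk : k \in K.
  by have := mem_section_lifted su Lk; rewrite ksu Ssu Ssv; case: (k \in K).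
exists (f k); first by rewrite mem_morphim // inE K'k.
by have [_ <-] := proj_perm_lifted p_surj Lk; rewrite ksu.
Qed.

Lemma index2_of_transitive_compl :
  exists H : {group {perm V}}, [/\ H \subset G, #|G : H| = 2 & vertex_transitive H].
Proof.
exists (f @* (K' :&: K))%G; split.
- by rewrite -[in X in _ \subset X](im_proj_compl K'_compl) morphimS ?subsetIl.
- exact: index_proj_transitive_complI.
- exact: transitive_proj_transitive_complI.
Qed.

End TransitiveComplement.

Section IndexTwoSubgroup.

Variable H : {group {perm V}}.
Hypotheses (sHG : H \subset G) (iHG : #|G : H| = 2) (H_tr : vertex_transitive H).

Let sKL := compl_sub_lifted K_compl.

Definition twisted_compl := [set x in L | (x \in K) == (f x \in H)].

Lemma twisted_compl_group_set : group_set twisted_compl.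
Proof.
apply: (group_set_index2_eq (G := G)) => //.
- exact: index_compl_lifted K_compl.
- by rewrite im_proj.
Qed.
Canonical twisted_compl_group := Group twisted_compl_group_set.

Lemma twisted_compl_cM x :
  x \in L -> (c * x \in twisted_compl) = (x \notin twisted_compl).
Proof.
move=> Lx; rewrite ![_ \in twisted_compl]inE groupM ?c_lifted // Lx morphM ?c_lifted //.
by rewrite proj_c mul1g (compl_cM K_compl) //; case: (x \in K); case: (f x \in H).
Qed.

Lemma twisted_compl_compl : twisted_compl_group \in [complements to CT et p in L].
Proof.
have sTL : twisted_compl \subset L by apply/subsetP=> x /setIdP[].
apply: (compl_order2 (c := c)) => // [|| x Lx]; last by rewrite twisted_compl_cM // orbN.
  by rewrite /= -ker_f subsetIl.
rewrite /= [_ \in twisted_compl]inE c_lifted proj_c group1.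
by rewrite (negbTE (c_notin_compl K_compl)).
Qed.

Lemma twisted_compl_same_side u v :
  (u \in S) = (v \in S) -> exists2 k, k \in twisted_compl & k u = v.
Proof.
move=> uv; have /imsetP[v0 _ _] := H_tr; move/(vertex_transitiveP v0): H_tr => trH.
have [h Hh hpu] := trH (p u) (p v).
have [b Kb fb] := compl_lift K_compl (subsetP sHG h Hh).
have Lb := subsetP sKL b Kb; have [_ pb] := proj_perm_lifted p_surj Lb.
exists b; first by rewrite inE Lb Kb fb Hh.
have [|//|bu] := @cover_fibre v (b u); first by rewrite pb -hpu -fb.
by move: (mem_section_compl u Kb); rewrite bu mem_section_c uv; case: (v \in S).
Qed.

Lemma twisted_compl_swap u :
  exists2 k, k \in twisted_compl & (k u \in S) = (u \notin S).
Proof.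
have [g Gg notHg] : exists2 g, g \in G & g \notin H.
  by apply/subsetPn; rewrite -indexg_gt1 iHG.
have [b Kb fb] := compl_lift K_compl Gg.
have Lb := subsetP sKL b Kb.
have notKcb : c * b \notin K by rewrite (compl_cM K_compl) // Kb.
exists (c * b); last by rewrite mem_section_lifted ?(negbTE notKcb) // groupM ?c_lifted.
by rewrite twisted_compl_cM // inE Lb Kb fb (negbTE notHg).
Qed.

Lemma twisted_compl_transitive : vertex_transitive twisted_compl_group.
Proof.
have /imsetP[v0 _ _] := H_tr; have [x0 _] := p_surj v0.
apply/(vertex_transitiveP x0) => u v.
have [|uv] := eqVneq (u \in S) (v \in S); first exact: twisted_compl_same_side.
have [k Tk ku] := twisted_compl_swap u.
have [|k' Tk' k'u] := @twisted_compl_same_side (k u) v.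
  by rewrite ku; move: uv; case: (u \in S); case: (v \in S).
by exists (k * k'); rewrite ?groupM // permM.
Qed.

Lemma transitive_compl_of_index2 : exists K' : {group {perm Vt}},
  K' \in [complements to CT et p in L] /\ vertex_transitive K'.
Proof.
by exists twisted_compl_group; rewrite twisted_compl_compl twisted_compl_transitive.
Qed.

End IndexTwoSubgroup.

End SplitTwoCover.

Unset Implicit Arguments.

Theorem proposition3p2 (Vt V : finType) (et : rel Vt) (e : rel V)
    (p : Vt -> V) (G : {group {perm V}}) :
  simple_graph et -> simple_graph e ->
  connected_graph et -> connected_graph e ->
  two_cover et e p ->
  G \subset Aut_graph e ->
  vertex_transitive G ->
  lifts et p G ->
  (exists K : {group {perm Vt}},
      K \in [complements to CT et p in lifted_group et p G] /\ sectional p K) ->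
  (exists K : {group {perm Vt}},
      K \in [complements to CT et p in lifted_group et p G] /\ vertex_transitive K)
  <->
  (exists H : {group {perm V}},
      [/\ H \subset G, #|G : H| = 2%N & vertex_transitive H]).
Proof.
move=> _ _ _ _ cover _ _ liftG [K [K_compl [S [S_section K_S]]]].
have [c c_neq1 CT_c] := two_cover_CT cover.
split=> [[K' [K'_compl K'_tr]] | [H [sHG iHG H_tr]]].
  exact: (index2_of_transitive_compl cover c_neq1 CT_c liftG S_section K_compl K_S
            K'_compl K'_tr).
exact: (transitive_compl_of_index2 cover c_neq1 CT_c liftG S_section K_compl K_S
          sHG iHG H_tr).
Qed.
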